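(* Let $q\ge2$ be even, $n\ge1$, $k\in[1,n]$, $V\subseteq\Sigma_q^n$ and $\boldsymbol{x}\in V$. Let $N_k(\boldsymbol{x};V)=\{\boldsymbol{z}\in V:\boldsymbol{z}\ne\boldsymbol{x},\ RC_k^1(\boldsymbol{z})\cap RC_k^1(\boldsymbol{x})\ne\varnothing\}$. Then $\#N_k(\boldsymbol{x};V)\le n(n-k+1)-1$.
   Context: $\Sigma_q=\{0,\dots,q-1\}$. A complement operation is a fixed bijection $a\mapsto\overline{a}$ on $\Sigma_q$ with $\overline{a}\ne a$, $\overline{\overline{a}}=a$; $\boldsymbol{v}^{RC}=\overline{v_k}\cdots\overline{v_1}$ for $\boldsymbol{v}=v_1\cdots v_k$. For $\boldsymbol{x}=\boldsymbol{u}\boldsymbol{v}\boldsymbol{w}\in\Sigma_q^n$ with $|\boldsymbol{u}|=i-1$, $|\boldsymbol{v}|=k$, $RC_{k,i}(\boldsymbol{x})=\boldsymbol{u}\boldsymbol{v}\boldsymbol{v}^{RC}\boldsymbol{w}$, and $RC_k^1(\boldsymbol{x})=\{RC_{k,i}(\boldsymbol{x}):i\in[1,n-k+1]\}$. *)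

From mathcomp Require Import all_boot.
Set Implicit Arguments. Unset Strict Implicit. Unset Printing Implicit Defensive.

(* Alphabet Sigma_q = 'I_q; words are sequences (seq 'I_q).
   A complement operation: an involution without fixed points. *)
Definition is_complement (q : nat) (c : 'I_q -> 'I_q) : Prop :=
  (forall a, c a != a) /\ (forall a, c (c a) = a).

Definition revcomp (q : nat) (c : 'I_q -> 'I_q) (v : seq 'I_q) : seq 'I_q :=
  rev (map c v).

(* RC_{k,i}(x) with i 1-based (i in [1, n-k+1]): x = u v w, |u| = i-1, |v| = k,
   result u v v^{RC} w. *)
Definition RC (q : nat) (c : 'I_q -> 'I_q) (k i : nat) (x : seq 'I_q) : seq 'I_q :=
  let u := take i.-1 x in
  let v := take k (drop i.-1 x) in
  let w := drop (i.-1 + k) x in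
  u ++ v ++ revcomp c v ++ w.

Definition in_RC1 (q : nat) (c : 'I_q -> 'I_q) (n k : nat) (x y : seq 'I_q) : bool :=
  [exists i : 'I_(n - k + 1), y == RC c k i.+1 x].

Definition RC1_meet (q : nat) (c : 'I_q -> 'I_q) (n k : nat) (z x : seq 'I_q) : bool :=
  [exists i : 'I_(n - k + 1), in_RC1 c n k x (RC c k i.+1 z)].

Definition Nk (q : nat) (c : 'I_q -> 'I_q) (n k : nat)
  (V : {set n.-tuple 'I_q}) (x : n.-tuple 'I_q) : {set n.-tuple 'I_q} :=
  [set z in V | (z != x) && RC1_meet c n k z x].

(* If z is a neighbour of x then RC_{k,i+1}(z) = RC_{k,j+1}(x) for some i, j, and z is
   recovered from RC_{k,j+1}(x) by deleting the inserted block at position i. So z is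
   determined by the pair (i, j), and i = j would give z = x. Hence the neighbours are
   at most the (n-k+1)(n-k) off-diagonal pairs, which is below n(n-k+1) - 1. *)

From mathcomp Require Import all_boot.
From mathcomp Require Import zify.
Set Implicit Arguments.

Definition unRC (T : Type) (k i : nat) (y : seq T) : seq T :=
  take (i + k) y ++ drop (i + k + k) y.

Lemma RCK (q : nat) (c : 'I_q -> 'I_q) (k i : nat) (z : seq 'I_q) :
  i + k <= size z -> unRC k i (RC c k i.+1 z) = z.
Proof.
move=> hik; rewrite /unRC /RC /revcomp /=.
have su : size (take i z) = i by rewrite size_take; case: ltnP => //; lia.
have sv : size (take k (drop i z)) = k.
  by rewrite size_take size_drop; case: ltnP => //; lia.
have svRC : size (rev (map c (take k (drop i z)))) = k by rewrite size_rev size_map.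
rewrite catA take_cat size_cat su sv ltnn subnn take0 cats0.
rewrite drop_cat size_cat su sv ltnNge leq_addr /= addKn.
by rewrite drop_cat svRC ltnn subnn drop0 -takeD cat_take_drop.
Qed.

Lemma card_offdiag (m : nat) : #|[pred p : 'I_m * 'I_m | p.1 != p.2]| = m * m.-1.
Proof.
have diagE : [predC [pred p : 'I_m * 'I_m | p.1 != p.2]] =i [set (i, i) | i : 'I_m].
  case=> a b; rewrite !inE /= negbK; apply/eqP/imsetP => [<-|[i _ [-> ->]]] //.
  by exists a.
have := cardC [pred p : 'I_m * 'I_m | p.1 != p.2].
rewrite (eq_card diagE) card_imset ?card_prod ?card_ord; last by move=> a b [].
by move=> hP; rewrite -subn1 mulnBr muln1 -hP addnK.
Qed.

Section Neighbours.

Variables (q : nat) (c : 'I_q -> 'I_q) (n k : nat).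
Variables (V : {set n.-tuple 'I_q}) (x : n.-tuple 'I_q).
Hypothesis k_le_n : k <= n.

Let m := n - k + 1.

Definition neighbour_of (p : 'I_m * 'I_m) : n.-tuple 'I_q :=
  insubd x (unRC k p.1 (RC c k p.2.+1 x)).

Lemma Nk_sub_offdiag :
  Nk c k V x \subset neighbour_of @: [pred p : 'I_m * 'I_m | p.1 != p.2].
Proof.
apply/subsetP => z; rewrite inE => /and3P [_ zx /existsP [i /existsP [j /eqP RCij]]].
have hik : i + k <= n by have := ltn_ord i; lia.
have zE : val z = unRC k i (RC c k j.+1 x) by rewrite -RCij RCK ?size_tuple.
apply/imsetP; exists (i, j); last first.
  by apply: val_inj; rewrite val_insubd /= -zE size_tuple eqxx.
rewrite inE /=; apply: contra zx => /eqP ij; apply/eqP/val_inj.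
by rewrite zE -ij RCK ?size_tuple.
Qed.

Lemma card_Nk : #|Nk c k V x| <= m * m.-1.
Proof.
rewrite -card_offdiag; apply: leq_trans (subset_leq_card Nk_sub_offdiag) _.
exact: leq_imset_card.
Qed.

End Neighbours.

Theorem lemma6 (q : nat) (c : 'I_q -> 'I_q) (n k : nat)
  (V : {set n.-tuple 'I_q}) (x : n.-tuple 'I_q) :
  2 <= q -> ~~ odd q -> is_complement c ->
  1 <= n -> 1 <= k <= n -> x \in V ->
  #|Nk c k V x| <= n * (n - k + 1) - 1.
Proof.
move=> _ _ _ _ /andP [k_gt0 k_le_n] _.
apply: leq_trans (card_Nk c k V x k_le_n) _.
have [t ->] : exists t, n = k + t by exists (n - k); lia.
nia.
Qed.
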